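(* Let $L$ be a finite-dimensional pure, nonnilpotent, solvable Lie algebra over $\mathbb{C}$ of breadth $2$ such that $\dim[L,L]=2$ and $\dim L^k=2$ for all integers $k\geq 2$. Then the following are equivalent: (1) $C_L([L,L])\neq\{0\}$; (2) $[L,L]$ is an abelian ideal of $L$; (3) $[L,L]\subseteq C_L([L,L])$.
   Context: For $x\in L$, $b(x)=\mathrm{rank}(\mathrm{ad}_x)$ and the breadth of $L$ is $b(L)=\max\{b(x)\mid x\in L\}$. $L$ is pure if it has no abelian ideal as a direct summand; equivalently $Z(L)\subseteq[L,L]$, where $Z(L)$ is the center. The lower central series is indexed by $L^0=L$, $L^1=[L,L]$, $L^k=[L,L^{k-1}]$ for $k\geq 2$. $C_L(S)$ denotes the centralizer of a subset $S$ in $L$. *)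

From HB Require Import structures.
From mathcomp Require Import all_boot all_order all_algebra.
From mathcomp.real_closed Require Import complex.
From mathcomp Require Import reals Rstruct.
Set Implicit Arguments. Unset Strict Implicit. Unset Printing Implicit Defensive.
Import Order.TTheory GRing.Theory Num.Theory.
Local Open Scope ring_scope.

Definition Cfield : fieldType := (complex Rdefinitions.R).

Section Lie.
Variable (F : fieldType) (V : vectType F).


Definition lie_bracket (br : V -> V -> V) : Prop :=
  [/\ (forall (a : F) x y z, br (a *: x + y) z = a *: br x z + br y z),
      (forall (a : F) x y z, br x (a *: y + z) = a *: br x y + br x z),
      (forall x, br x x = 0) &
      (forall x y z, br x (br y z) + br y (br z x) + br z (br x y) = 0)].

Variable br : V -> V -> V.

(* [U, W] = span of all [u, w], u in U, w in W (spanned by brackets of basis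
   vectors, by bilinearity). *)
Definition lie_brs (U W : {vspace V}) : {vspace V} :=
  (\sum_(i < \dim U) \sum_(j < \dim W)
      <[br (vbasis U)`_i (vbasis W)`_j]>)%VS.

Definition derived_alg : {vspace V} := lie_brs fullv fullv.

Fixpoint lcs (k : nat) : {vspace V} :=
  if k is k'.+1 then lie_brs fullv (lcs k') else fullv.

Fixpoint dser (k : nat) : {vspace V} :=
  if k is k'.+1 then lie_brs (dser k') (dser k') else fullv.

Definition nilpotent_lie : Prop := exists k, lcs k = 0%VS.
Definition solvable_lie : Prop := exists k, dser k = 0%VS.

Definition ad (x : V) : 'End(V) := linfun (br x).
Definition lbreadth (x : V) : nat := \dim (limg (ad x)).
Definition breadth_is (n : nat) : Prop :=
  (exists x, lbreadth x = n) /\ (forall x, (lbreadth x <= n)%N).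

Definition in_center (z : V) : Prop := forall y, br z y = 0.
Definition in_centralizer (S : {vspace V}) (x : V) : Prop :=
  forall y, y \in S -> br x y = 0.

Definition pure_lie : Prop := forall z, in_center z -> z \in derived_alg.

Definition is_ideal (I : {vspace V}) : Prop :=
  forall x y, y \in I -> br x y \in I.
Definition is_abelian (I : {vspace V}) : Prop :=
  forall x y, x \in I -> y \in I -> br x y = 0.

End Lie.

(* Only purity and dim [L,L] = 2 matter.  If a nonzero x centralizes [L,L],
   then either x is central, hence lies in [L,L] by purity, or some [x,y] is
   nonzero and, by the Jacobi identity, still centralizes the ideal [L,L].
   Either way [L,L] contains a nonzero z commuting with all of [L,L]; a
   two-dimensional space spanned by z and one more vector is then abelian. *)
From Stdlib Require Import Classical.
From HB Require Import structures.
From mathcomp Require Import all_boot all_order all_algebra.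
Set Implicit Arguments. Unset Strict Implicit. Unset Printing Implicit Defensive.
Import GRing.Theory.
Local Open Scope ring_scope.

Section LieBracket.
Variables (F : fieldType) (V : vectType F) (br : V -> V -> V).
Hypothesis lie_br : lie_bracket br.

Lemma brDl x y z : br (x + y) z = br x z + br y z.
Proof. by have [brl _ _ _] := lie_br; have := brl 1 x y z; rewrite !scale1r. Qed.

Lemma br0l z : br 0 z = 0.
Proof. by apply: (addrI (br 0 z)); rewrite -brDl !addr0. Qed.

Lemma brZl a x z : br (a *: x) z = a *: br x z.
Proof. by have [brl _ _ _] := lie_br; have := brl a x 0 z; rewrite br0l !addr0. Qed.

Lemma brDr x y z : br z (x + y) = br z x + br z y.
Proof. by have [_ brr _ _] := lie_br; have := brr 1 z x y; rewrite !scale1r. Qed.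

Lemma br0r z : br z 0 = 0.
Proof. by apply: (addrI (br z 0)); rewrite -brDr !addr0. Qed.

Lemma brZr a x z : br z (a *: x) = a *: br z x.
Proof. by have [_ brr _ _] := lie_br; have := brr a z x 0; rewrite br0r !addr0. Qed.

Lemma br_anticomm x y : br x y = - br y x.
Proof.
have [_ _ brxx _] := lie_br; apply/eqP; rewrite -addr_eq0.
by have := brxx (x + y); rewrite brDl !brDr !brxx add0r addr0 => ->.
Qed.

Lemma br_derived x y : br x y \in derived_alg br.
Proof.
rewrite (coord_vbasis (memvf x)) (coord_vbasis (memvf y)).
rewrite (big_morph (br^~ _) (fun u v => brDl u v _) (br0l _)).
apply: memv_suml => i _; rewrite brZl; apply: memvZ.
rewrite (big_morph (br _) (fun u v => brDr u v _) (br0r _)).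
apply: memv_suml => j _; rewrite brZr; apply: memvZ.
apply: (subvP (sumv_sup i _ _)) => //; apply: (subvP (sumv_sup j _ _)) => //.
exact: memv_line.
Qed.

Lemma derived_ideal : is_ideal br (derived_alg br).
Proof. by move=> x y _; apply: br_derived. Qed.

Lemma centralizer_ideal_br (I : {vspace V}) x y :
  is_ideal br I -> in_centralizer br I x -> in_centralizer br I (br x y).
Proof.
move=> idI cIx d dI; have [_ _ _ jacobi] := lie_br.
have := jacobi x y d.
rewrite (cIx _ (idI y d dI)) (br_anticomm d x) (cIx _ dI) oppr0 br0r !add0r.
by move=> bd_xy; rewrite br_anticomm bd_xy oppr0.
Qed.

Lemma centralizer_derived_meet : pure_lie br ->
    forall x, x != 0 -> in_centralizer br (derived_alg br) x ->
  exists2 z, z \in derived_alg br & z != 0 /\ in_centralizer br (derived_alg br) z.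
Proof.
move=> pure x x_neq0 cDx.
have [x_central | /not_all_ex_not [y bxy_neq0]] := classic (in_center br x).
  by exists x; [apply: pure | split].
exists (br x y); first exact: br_derived.
by split; [apply/eqP | apply: centralizer_ideal_br => //; apply: derived_ideal].
Qed.

Lemma dim2_abelian (D : {vspace V}) z :
    \dim D = 2%N -> z \in D -> z != 0 -> in_centralizer br D z ->
  is_abelian br D.
Proof.
move=> dimD zD z_neq0 cDz u v uD vD.
have brDz d : d \in D -> br d z = 0 by move=> /cDz bzd; rewrite br_anticomm bzd oppr0.
have [/vlineP [k ->] | u_notin_z] := boolP (u \in <[z]>%VS).
  by rewrite brZl cDz // scaler0.
have free_uz : free [:: u; z] by rewrite free_cons span_seq1 u_notin_z seq1_free.
have span_uz : <<[:: u; z]>>%VS = D.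
  apply/eqP; rewrite eqEdim dimD (eqP free_uz) leqnn andbT.
  by apply/span_subvP => w; rewrite !inE => /orP [] /eqP ->.
move: vD; rewrite -span_uz span_cons span_seq1.
move=> /memv_addP [_ /vlineP [k ->] [_ /vlineP [l ->] ->]].
have [_ _ brxx _] := lie_br.
by rewrite brDr !brZr brxx brDz // !scaler0 addr0.
Qed.

End LieBracket.

Theorem proposition3p6 (V : vectType Cfield) (br : V -> V -> V) :
  lie_bracket br ->
  pure_lie br -> ~ nilpotent_lie br -> solvable_lie br ->
  breadth_is br 2 ->
  \dim (derived_alg br) = 2%N ->
  (forall k, (2 <= k)%N -> \dim (lcs br k) = 2%N) ->
  [/\ ((exists x, x != 0 /\ in_centralizer br (derived_alg br) x) <->
        (is_ideal br (derived_alg br) /\ is_abelian br (derived_alg br))),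
      ((is_ideal br (derived_alg br) /\ is_abelian br (derived_alg br)) <->
        (forall x, x \in derived_alg br -> in_centralizer br (derived_alg br) x)) &
      ((exists x, x != 0 /\ in_centralizer br (derived_alg br) x) <->
        (forall x, x \in derived_alg br -> in_centralizer br (derived_alg br) x))].
Proof.
move=> lie_br pure _ _ _ dimD _.
set D := derived_alg br.
have C1_2 : (exists x, x != 0 /\ in_centralizer br D x) -> is_abelian br D.
  move=> [x [x_neq0 cDx]].
  have [z zD [z_neq0 cDz]] := centralizer_derived_meet lie_br pure x_neq0 cDx.
  exact: (dim2_abelian lie_br dimD zD z_neq0 cDz).
have C3_1 : (forall x, x \in D -> in_centralizer br D x) ->
    exists x, x != 0 /\ in_centralizer br D x.
  move=> cD; exists (vpick D); split; last by apply/cD/memv_pick.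
  by rewrite vpick0 -dimv_eq0 dimD.
have C2_3 : is_abelian br D -> forall x, x \in D -> in_centralizer br D x.
  by move=> abD x xD y yD; apply: abD.
have C3_2 : (forall x, x \in D -> in_centralizer br D x) -> is_abelian br D.
  by move=> cD x y xD; apply: cD.
have idealD : is_ideal br D := derived_ideal lie_br.
split; split.
- by move=> /C1_2 abD; split.
- by case=> _ /C2_3/C3_1.
- by case=> _ /C2_3.
- by move=> /C3_2 abD; split.
- by move=> /C1_2/C2_3.
- exact: C3_1.
Qed.
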